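(* There is no axis rule $f$ (defined for profiles over every finite candidate set) that is a scoring rule, neutral, consistent with linearity, resistant to cloning, and satisfies clone-proximity.
   Context: Candidates come from a fixed infinite universe; rules are defined for profiles over every finite candidate set $C$. An approval ballot is a nonempty subset $A\subseteq C$; a profile over $C$ is a finite sequence of ballots. An axis is a strict linear order $\triangleleft$ on $C$, $\overleftarrow{\triangleleft}$ its reverse; a ballot $A$ is an interval of $\triangleleft$ if for all $a,b\in A$ and every $c$ with $a\triangleleft c\triangleleft b$ we have $c\in A$. A profile is linear if some axis makes all its ballots intervals; $\mathrm{con}(P)$ is the set of such axes. An axis rule maps each profile $P$ over $C$ to a nonempty set $f(P)$ of axes on $C$ closed under reversal. $f$ is a scoring rule if for every finite $C$ there is a cost function $\mathrm{cost}_C:(2^C\setminus\{\emptyset\})\times\{\text{axes on }C\}\to\mathbb R_{\ge0}$ with $f(P)=\arg\min_{\triangleleft}\sum_{A\in P}\mathrm{cost}_C(A,\triangleleft)$ for every profile $P$ over $C$. $f$ is neutral if for every bijection $\pi:C\to C'$, $f(\pi(P))=\pi(f(P))$ (renaming candidates in ballots and axes). $f$ is consistent with linearity if $f(P)=\mathrm{con}(P)$ for every linear profile. Two candidates $a,a'$ are clones in $P$ if for every $A\in P$, $a\in A$ iff $a'\in A$. $f$ satisfies clone-proximity if for every profile $P$ with clones $a,a'$, every $\triangleleft\in f(P)$, every $x$ with $a\triangleleft x\triangleleft a'$ or $a'\triangleleft x\triangleleft a$, and every $A\in P$ with $a,a'\in A$, we have $x\in A$. For $c\in C$, $P_{-c}$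 is the profile over $C\setminus\{c\}$ obtained by removing $c$ from every ballot (ballots becoming empty are discarded), and $\triangleleft_{-c}$ is the restriction of $\triangleleft$ to $C\setminus\{c\}$. $f$ is resistant to cloning if for every profile $P$ with clones $a,a'$: (1) for every $\triangleleft\in f(P)$, $\triangleleft_{-a}\in f(P_{-a})$; and (2) for every $\triangleleft^*\in f(P_{-a})$ there is $\triangleleft\in f(P)$ with $\triangleleft_{-a}=\triangleleft^*$. *)

From HB Require Import structures.
From mathcomp Require Import all_boot all_order all_algebra finmap.
From mathcomp Require Import reals.
Set Implicit Arguments. Unset Strict Implicit. Unset Printing Implicit Defensive.
Import Order.TTheory GRing.Theory Num.Theory.
Local Open Scope fset_scope.

Section Defs.
Variable U : choiceType.

Definition infinite_universe : Prop := forall X : {fset U}, exists x : U, x \notin X.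

(* An axis on C: a duplicate-free enumeration of C; a ◁ b iff a occurs before b. *)
Definition is_axis (C : {fset U}) (s : seq U) : Prop :=
  uniq s /\ forall x, (x \in s) = (x \in C).

Definition is_ballot (C A : {fset U}) : Prop := A != fset0 /\ A `<=` C.
Definition profile_over (C : {fset U}) (P : seq {fset U}) : Prop :=
  forall A, A \in P -> is_ballot C A.

Definition is_interval (s : seq U) (A : {fset U}) : Prop :=
  forall a b c, a \in A -> b \in A -> c \in s ->
    (index a s < index c s)%N -> (index c s < index b s)%N -> c \in A.

Definition con (C : {fset U}) (P : seq {fset U}) (s : seq U) : Prop :=
  is_axis C s /\ forall A, A \in P -> is_interval s A.
Definition linear_profile (C : {fset U}) (P : seq {fset U}) : Prop :=
  exists s, con C P s.

Definition rule_type := {fset U} -> seq {fset U} -> seq U -> Prop.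

Definition axis_rule (f : rule_type) : Prop :=
  forall C P, profile_over C P ->
    (exists s, f C P s) /\
    (forall s, f C P s -> is_axis C s) /\
    (forall s, f C P s -> f C P (rev s)).

Definition scoring_rule (R : realType) (f : rule_type) : Prop :=
  forall C : {fset U}, exists cost : {fset U} -> seq U -> R,
    (forall A s, is_ballot C A -> is_axis C s -> (0 <= cost A s)%R) /\
    (forall P, profile_over C P -> forall s,
       f C P s <-> (is_axis C s /\
         forall t, is_axis C t ->
           (\sum_(A <- P) cost A s <= \sum_(A <- P) cost A t)%R)).

(* Renaming along a bijection pi : C -> C' (given as a map U -> U injective on C
   with image C'). *)
Definition rename_profile (pi : U -> U) (P : seq {fset U}) : seq {fset U} :=
  map (fun A => pi @` A) P.

Definition neutral (f : rule_type) : Prop :=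
  forall (C C' : {fset U}) (pi : U -> U),
    {in C &, injective pi} -> pi @` C = C' ->
    forall P, profile_over C P ->
      forall s', f C' (rename_profile pi P) s' <-> exists2 s, f C P s & s' = map pi s.

Definition consistent_with_linearity (f : rule_type) : Prop :=
  forall C P, profile_over C P -> linear_profile C P ->
    forall s, f C P s <-> con C P s.

Definition clones (C : {fset U}) (P : seq {fset U}) (a a' : U) : Prop :=
  [/\ a \in C, a' \in C, a != a' &
      forall A, A \in P -> (a \in A) = (a' \in A)].

Definition clone_proximity (f : rule_type) : Prop :=
  forall C P a a', profile_over C P -> clones C P a a' ->
    forall s, f C P s ->
      forall x A, x \in s ->
        ((index a s < index x s < index a' s)%N \/
         (index a' s < index x s < index a s)%N) ->
        A \in P -> a \in A -> a' \in A -> x \in A.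

Definition remove_cand (P : seq {fset U}) (c : U) : seq {fset U} :=
  [seq B <- map (fun A => A `\ c) P | B != fset0].
Definition restrict_axis (s : seq U) (c : U) : seq U := filter (predC1 c) s.

Definition resistant_to_cloning (f : rule_type) : Prop :=
  forall C P a a', profile_over C P -> clones C P a a' ->
    (forall s, f C P s -> f (C `\ a) (remove_cand P a) (restrict_axis s a)) /\
    (forall t, f (C `\ a) (remove_cand P a) t ->
       exists2 s, f C P s & restrict_axis s a = t).

End Defs.

(* Averaging the cost function of a neutral scoring rule over all relabellings
   of n candidates and over the reversal of the axis shows that the rule picks
   exactly the axes minimising the sum, over the ballots A, of X(positions of A),
   where X depends only on the set of positions and is invariant under mirroring.
   Consistency with linearity makes all intervals of a given length equally
   cheap, and strictly cheaper than sets of that size with a gap.  This fixes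
   optimal axes of four small profiles on four candidates.  Adding a clone of
   one candidate, resistance to cloning and clone-proximity leave exactly two
   extensions of each such axis; they have equal scores, so both are optimal.
   Comparing the scores of these optimal axes on five candidates gives an
   inconsistent system of linear (in)equalities. *)

From mathcomp Require Import all_boot all_order all_algebra finmap reals.
From mathcomp Require Import lra.
Set Implicit Arguments. Unset Strict Implicit. Unset Printing Implicit Defensive.
Import Order.TTheory GRing.Theory Num.Theory.
Local Open Scope fset_scope.

Section Argmin.
Variable R : realType.

Definition minimizes (T : eqType) (D : seq T) (g : T -> R) (w : T) : bool :=
  all (fun t => g w <= g t)%R D.

Lemma ler_sum_eq (I : eqType) (J : seq I) (a b : I -> R) :
  (forall j, j \in J -> b j <= a j)%R ->
  (\sum_(j <- J) a j <= \sum_(j <- J) b j)%R -> {in J, a =1 b}.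
Proof.
move=> le_ba le_sum.
have ab_ge0 j : j \in J -> (0 <= a j - b j)%R by move/le_ba; rewrite subr_ge0.
have : (\sum_(j <- J | j \in J) (a j - b j) == 0)%R.
  by rewrite eq_le sumr_ge0 // andbT sumrB -!big_seq subr_le0.
rewrite psumr_eq0 // => /allP ab j jJ.
by apply/eqP; rewrite -subr_eq0; have := ab j jJ; rewrite jJ.
Qed.

Lemma argmin_sum (T I : eqType) (D : seq T) (J : seq I) (g : I -> T -> R)
    (Fp : T -> Prop) :
  J != [::] -> (exists2 w0, w0 \in D & Fp w0) ->
  (forall j, j \in J -> {in D, forall w, Fp w <-> minimizes D (g j) w}) ->
  {in D, forall w, Fp w <-> minimizes D (fun v => \sum_(j <- J) g j v)%R w}.
Proof.
move=> Jn [w0 w0D Fw0] g_min w wD; split=> [Fw | /allP min_w].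
  apply/allP => t tD; rewrite big_seq_cond [leRHS]big_seq_cond.
  by apply: ler_sum => j /andP[jJ _]; apply: (allP ((g_min j jJ w wD).1 Fw)).
case: J Jn g_min min_w => [|j0 J] // _ g_min min_w.
have w0_min j : j \in j0 :: J -> (g j w0 <= g j w)%R.
  by move=> jJ; apply: (allP ((g_min j jJ w0 w0D).1 Fw0)).
have eq_w := ler_sum_eq w0_min (min_w w0 w0D).
apply/(g_min j0 (mem_head _ _) w wD)/allP => t tD; rewrite eq_w ?mem_head //.
exact: (allP ((g_min j0 (mem_head _ _) w0 w0D).1 Fw0)).
Qed.

End Argmin.

(** * Axes of the first [n] naturals *)

Definition axes n : seq (seq nat) := permutations (iota 0 n).
Definition bounded n (A : seq nat) := all (fun i => i < n) A.
Definition positions (w A : seq nat) := map (index^~ w) A.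
Definition relabel (s A : seq nat) := map (nth 0 s) A.
Definition mirror n (A : seq nat) := map (fun i => n.-1 - i) A.

Definition nat_profile n (P : seq (seq nat)) :=
  all (fun A => (A != [::]) && bounded n A) P.

Section Axes.
Variable n : nat.

Lemma mem_axes s : (s \in axes n) = perm_eq s (iota 0 n).
Proof. exact: mem_permutations. Qed.

Lemma axes_mem s i : s \in axes n -> (i \in s) = (i < n).
Proof. by rewrite mem_axes => /perm_mem ->; rewrite mem_iota. Qed.

Lemma axes_uniq s : s \in axes n -> uniq s.
Proof. by rewrite mem_axes => /perm_uniq ->; apply: iota_uniq. Qed.

Lemma axes_size s : s \in axes n -> size s = n.
Proof. by rewrite mem_axes => /perm_size ->; rewrite size_iota. Qed.

Lemma axes_bounded s : s \in axes n -> bounded n s.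
Proof. by move=> sA; apply/allP => i; rewrite (axes_mem _ sA). Qed.

Lemma iota_axes : iota 0 n \in axes n.
Proof. by rewrite mem_axes. Qed.

Lemma rev_axes s : s \in axes n -> rev s \in axes n.
Proof. by rewrite !mem_axes perm_rev. Qed.

Lemma uniq_axes t : uniq t -> {subset t <= iota 0 n} -> size t = n -> t \in axes n.
Proof.
move=> ut sub st; rewrite mem_axes uniq_perm ?iota_uniq //.
have := uniq_min_size ut sub; rewrite size_iota st leqnn.
by move=> /(_ isT) [].
Qed.

Lemma index_iota0 i : i < n -> index i (iota 0 n) = i.
Proof.
move=> lt_in; have := nth_iota 0 0 lt_in; rewrite add0n => {1}<-.
by rewrite index_uniq ?size_iota ?iota_uniq.
Qed.

Lemma positions_iota A : bounded n A -> positions (iota 0 n) A = A.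
Proof.
move=> /allP An; rewrite /positions -[RHS]map_id.
by apply/eq_in_map => i /An; apply: index_iota0.
Qed.

Lemma nth_axes s i : s \in axes n -> i < n -> nth 0 s i < n.
Proof. by move=> sA lt_in; rewrite -(axes_mem _ sA) mem_nth // (axes_size sA). Qed.

Lemma relabel_bounded s A : s \in axes n -> bounded n A -> bounded n (relabel s A).
Proof. by move=> sA /allP An; apply/allP => _ /mapP[i /An iA ->]; apply: nth_axes. Qed.

Lemma relabel_axes s v : s \in axes n -> v \in axes n -> relabel s v \in axes n.
Proof.
move=> sA vA; apply: uniq_axes; last by rewrite size_map (axes_size vA).
  rewrite map_inj_in_uniq ?(axes_uniq vA) // => i j; rewrite !(axes_mem _ vA) => ltin ltjn.
  by move/eqP; rewrite nth_uniq ?(axes_size sA) ?(axes_uniq sA) // => /eqP.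
by move=> j /mapP[i iv ->]; rewrite mem_iota /= nth_axes // -(axes_mem _ vA).
Qed.

Lemma relabel_surj s t : s \in axes n -> t \in axes n ->
  exists2 v, v \in axes n & relabel s v = t.
Proof.
move=> sA tA; have ts i : i \in t -> i \in s by rewrite (axes_mem _ sA) -(axes_mem _ tA).
exists (positions s t); last first.
  by rewrite /relabel -map_comp -[RHS]map_id; apply/eq_in_map => i /ts /= /nth_index ->.
apply: uniq_axes; last by rewrite size_map (axes_size tA).
  rewrite map_inj_in_uniq ?(axes_uniq tA) // => i j /ts si /ts sj eq_ij.
  by rewrite -(nth_index 0 si) eq_ij nth_index.
by move=> _ /mapP[i /ts si ->]; rewrite mem_iota /= -(axes_size sA) index_mem.
Qed.

Lemma perm_relabel_axes v : v \in axes n ->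
  perm_eq [seq relabel s v | s <- axes n] (axes n).
Proof.
move=> vA.
have inj : {in axes n &, injective (relabel^~ v)}.
  move=> s1 s2 s1A s2A eq_s; apply: (@eq_from_nth _ 0).
    by rewrite (axes_size s1A) (axes_size s2A).
  move=> i; rewrite (axes_size s1A) => lt_in.
  have iv : index i v < size v by rewrite index_mem (axes_mem _ vA).
  have := congr1 (nth 0 ^~ (index i v)) eq_s; rewrite /= !(nth_map 0) //.
  by rewrite nth_index // (axes_mem _ vA).
have uniq_img : uniq [seq relabel s v | s <- axes n].
  by rewrite map_inj_in_uniq // permutations_uniq.
have sub : {subset [seq relabel s v | s <- axes n] <= axes n}.
  by move=> _ /mapP[s sA ->]; apply: relabel_axes.
have [_ eq_img] := uniq_min_size uniq_img sub (eq_leq (esym (size_map _ _))).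
by rewrite uniq_perm ?permutations_uniq.
Qed.

Lemma index_rev_axes w a : w \in axes n -> a \in w ->
  index a (rev w) = n.-1 - index a w.
Proof.
move=> wA aw; have sw := axes_size wA.
have ia : index a w < n by rewrite -sw index_mem.
have lt_mirror : n.-1 - index a w < size w.
  by rewrite sw; case: (n) ia => // m _; rewrite ltnS leq_subr.
rewrite -{1}(nth_index 0 aw).
have -> : nth 0 w (index a w) = nth 0 (rev w) (n.-1 - index a w).
  rewrite nth_rev // sw; congr nth; case: (n) ia => // m; rewrite ltnS => ia /=.
  by rewrite subSS subKn.
by rewrite index_uniq ?rev_uniq ?(axes_uniq wA) // size_rev.
Qed.

Lemma relabel_nat_profile s P : s \in axes n -> nat_profile n P ->
  nat_profile n (map (relabel s) P).
Proof.
move=> sA /allP Pn; apply/allP => _ /mapP[A AP ->]; have /andP[An Ab] := Pn A AP.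
by rewrite relabel_bounded // andbT; case: (A) An.
Qed.

Lemma relabelK s v : s \in axes n -> bounded n v -> positions s (relabel s v) = v.
Proof.
move=> sA /allP vn; rewrite /positions -map_comp -[RHS]map_id.
by apply/eq_in_map => i /vn lt_in /=; rewrite index_uniq ?(axes_size sA) ?(axes_uniq sA).
Qed.

Lemma relabel_positions s v A : v \in axes n -> bounded n A ->
  relabel (relabel s v) (positions v A) = relabel s A.
Proof.
move=> vA /allP An; rewrite /relabel /positions -map_comp; apply/eq_in_map => a aA /=.
have av : a \in v by rewrite (axes_mem _ vA) An.
by rewrite (nth_map 0) ?index_mem // nth_index.
Qed.

Lemma positions_rev w A : w \in axes n -> bounded n A ->
  positions (rev w) A = mirror n (positions w A).
Proof.
move=> wA /allP An; rewrite /mirror /positions -map_comp; apply/eq_in_map => a aA /=.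
by rewrite index_rev_axes // (axes_mem _ wA) An.
Qed.

Lemma mirrorK A : bounded n A -> mirror n (mirror n A) = A.
Proof.
move=> /allP An; rewrite /mirror -map_comp -[RHS]map_id.
by apply/eq_in_map => i /An /=; case: (n) => // m; rewrite ltnS => /subKn.
Qed.

Definition prefix_axis A := A ++ [seq i <- iota 0 n | i \notin A].

Lemma prefix_axis_axes A : uniq A -> bounded n A -> prefix_axis A \in axes n.
Proof.
move=> uA /allP An; rewrite mem_axes /prefix_axis.
have A_perm : perm_eq A [seq i <- iota 0 n | i \in A].
  apply: uniq_perm => //; first by rewrite filter_uniq ?iota_uniq.
  by move=> i; rewrite mem_filter mem_iota add0n /=; case iA: (i \in A) => //=; rewrite An.
by rewrite (perm_trans (perm_cat A_perm (perm_refl _))) // perm_filterC.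
Qed.

Lemma positions_prefix A r : uniq A -> positions (A ++ r) A = iota 0 (size A).
Proof.
move=> uA; apply: (@eq_from_nth _ 0); first by rewrite size_map size_iota.
move=> i; rewrite size_map => lt_iA; rewrite (nth_map 0) // nth_iota // add0n.
by rewrite index_cat mem_nth // index_uniq.
Qed.

End Axes.

Definition pos_score (R : realType) (X : seq nat -> R) P w :=
  (\sum_(A <- P) X (positions w A))%R.

Lemma pos_score1 (R : realType) (X : seq nat -> R) A w :
  pos_score X [:: A] w = X (positions w A).
Proof. exact: big_seq1. Qed.

Section Scores.
Variables (R : realType) (n : nat) (X : seq nat -> R).
Hypothesis X_mem : forall S S', S =i S' -> X S = X S'.
Hypothesis X_mirror : forall S, bounded n S -> X (mirror n S) = X S.

Lemma pos_score_sort P w :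
  pos_score X P w = (\sum_(A <- P) X (sort leq (positions w A)))%R.
Proof. by rewrite /pos_score; apply: eq_bigr => A _; apply: X_mem => i; rewrite mem_sort. Qed.

Lemma pos_score_perm P a b :
  all (fun A => perm_eq (positions a A) (positions b A)) P ->
  pos_score X P a = pos_score X P b.
Proof. by move=> /allP eq_pos; apply: eq_big_seq => A /eq_pos /perm_mem /X_mem. Qed.

Lemma score_mirror_perm S S' : bounded n S -> perm_eq (mirror n S) S' -> X S' = X S.
Proof. by move=> Sn eqS; rewrite -(X_mirror Sn); apply/X_mem/perm_mem; rewrite perm_sym. Qed.

End Scores.

Section Fresh.
Variables (U : choiceType) (U_inf : infinite_universe U).

Fixpoint fresh_prefix n : seq U :=
  if n is m.+1 then xchoose (U_inf [fset x in fresh_prefix m]) :: fresh_prefix m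
  else [::].

Definition fresh n : U := xchoose (U_inf [fset x in fresh_prefix n]).

Lemma fresh_inj : injective fresh.
Proof.
have fresh_prefix_mem i j : i < j -> fresh i \in fresh_prefix j.
  elim: j => // j IH; rewrite ltnS leq_eqVlt inE => /predU1P[-> | /IH ->].
    by rewrite eqxx.
  by rewrite orbT.
have fresh_notin j : fresh j \notin fresh_prefix j.
  by have := xchooseP (U_inf [fset x in fresh_prefix j]); rewrite inE.
have fresh_neq i j : i < j -> fresh i != fresh j.
  by move=> /fresh_prefix_mem mem_ij; apply: contraNneq _ (fresh_notin j) => <-.
by move=> i j eq_ij; case: (ltngtP i j) => // /fresh_neq; rewrite eq_ij eqxx.
Qed.

End Fresh.

Lemma imfset_map (T T' : choiceType) (g : T -> T') (s : seq T) :
  g @` [fset x in s] = [fset x in map g s].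
Proof.
apply/fsetP => y; rewrite !inE; apply/imfsetP/mapP => [[x]|[x]].
  by rewrite /= inE => xs ->; exists x.
by move=> xs ->; exists x => //=; rewrite inE.
Qed.

Section Encoding.
Variables (U : choiceType) (u : nat -> U).
Hypothesis u_inj : injective u.

(* Candidate [i : nat] stands for [u i]; ballots and axes on the first [n]
   candidates are coded by sequences of naturals below [n]. *)
Definition cands (A : seq nat) : {fset U} := [fset x in map u A].
Definition candset n := cands (iota 0 n).

Lemma mem_cands A y : (y \in cands A) = (y \in map u A).
Proof. by rewrite inE. Qed.

Lemma cands_u A i : (u i \in cands A) = (i \in A).
Proof. by rewrite mem_cands mem_map. Qed.

Lemma cands_neq0 A : A != [::] -> cands A != fset0.
Proof.
by case: A => // i A _; apply/eqP => /fsetP/(_ (u i)); rewrite cands_u in_fset0 mem_head.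
Qed.

Lemma cands_axes n s : s \in axes n -> cands s = candset n.
Proof.
by move=> sA; apply/fsetP => y; rewrite !mem_cands; apply/perm_mem/perm_map; rewrite -mem_axes.
Qed.

Lemma axis_map n s : s \in axes n -> is_axis (candset n) (map u s).
Proof.
move=> sA; split; first by rewrite map_inj_uniq ?(axes_uniq sA).
by move=> y; rewrite -(cands_axes sA) mem_cands.
Qed.

Lemma axisP n s : is_axis (candset n) s -> exists2 t, t \in axes n & s = map u t.
Proof.
move=> [us ms]; have s_sub y : y \in s -> y \in map u (iota 0 n).
  by rewrite ms mem_cands.
pose t := [seq index y (map u (iota 0 n)) | y <- s].
have st : s = map u t.
  rewrite -map_comp -[LHS]map_id; apply/eq_in_map => y /s_sub/mapP[i iI ->] /=.
  by rewrite (index_map u_inj) index_iota0 //; move: iI; rewrite mem_iota.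
exists t => //; rewrite mem_axes; apply: (perm_map_inj u_inj); rewrite -st.
by rewrite uniq_perm ?map_inj_uniq ?iota_uniq // => y; rewrite ms mem_cands.
Qed.

Lemma profile_nat n P : nat_profile n P -> profile_over (candset n) (map cands P).
Proof.
move=> /allP Pn _ /mapP[A AP ->]; have /andP[An /allP Ab] := Pn A AP.
split; first exact: cands_neq0.
apply/fsubsetP => y; rewrite !mem_cands => /mapP[i iA ->].
by rewrite map_f // mem_iota Ab.
Qed.

Lemma filter_map_predC1 c s :
  filter (predC1 (u c)) (map u s) = map u (filter (predC1 c) s).
Proof. by rewrite filter_map; congr map; apply: eq_filter => i /=; rewrite inj_eq. Qed.

Lemma cands_fsetD1 A c : cands A `\ u c = cands (filter (predC1 c) A).
Proof.
by apply/fsetP => y; rewrite in_fsetD1 !mem_cands -filter_map_predC1 mem_filter.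
Qed.

Lemma candset_fsetD1 n : candset n.+1 `\ u n = candset n.
Proof.
rewrite /candset cands_fsetD1 -addn1 iotaD filter_cat /= eqxx cats0.
by rewrite (all_filterP _) //; apply/allP => i; rewrite mem_iota => /andP[_ /ltn_eqF /negbT].
Qed.

Lemma interval_prefix A r : is_interval (map u (A ++ r)) (cands A).
Proof.
move=> a b c; rewrite !mem_cands => /mapP[i iA ->] /mapP[j jA ->] /mapP[k _ ->].
rewrite !(index_map u_inj) !index_cat jA => _; case: ifP => [kA _|_]; first exact: map_f.
by move=> /(leq_ltn_trans (leq_addr _ _)); rewrite ltnNge index_size.
Qed.

Lemma interval_iotaP n A : bounded n A ->
  is_interval (map u (iota 0 n)) (cands A) <->
  (forall i j k, i \in A -> k \in A -> i < j < k -> j \in A).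
Proof.
move=> /allP An; split=> [intA i j k iA kA /andP[ij jk] | convA].
  have kn := An k kA; have jn := ltn_trans jk kn; have in_ := ltn_trans ij jn.
  have := intA (u i) (u k) (u j); rewrite !cands_u !(index_map u_inj) !index_iota0 //.
  by apply; rewrite // map_f // mem_iota.
move=> a b c; rewrite !mem_cands => /mapP[i iA ->] /mapP[k kA ->] /mapP[j].
rewrite mem_iota /= => jn ->; rewrite (mem_map u_inj) !(index_map u_inj).
have [in_ kn] := (An i iA, An k kA).
by rewrite !index_iota0 // => ij jk; apply: (convA i j k); rewrite ?ij.
Qed.

Section Rule.
Variables (R : realType) (f : rule_type U).
Hypotheses (f_axis : axis_rule f) (f_score : scoring_rule R f) (f_neutral : neutral f).
Hypothesis f_lin : consistent_with_linearity f.
Hypotheses (f_res : resistant_to_cloning f) (f_prox : clone_proximity f).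

Definition fnat n P s := f (candset n) (map cands P) (map u s).

Lemma fnat_exists n P : nat_profile n P -> exists2 w, w \in axes n & fnat n P w.
Proof.
move=> /profile_nat Pn; have [[s fs] [s_axis _]] := f_axis Pn.
by have [w wA sw] := axisP (s_axis _ fs); exists w; rewrite // /fnat -sw.
Qed.

Lemma fnat_rev n P w : nat_profile n P -> fnat n P w <-> fnat n P (rev w).
Proof.
move=> /profile_nat Pn; have [_ [_ f_rev]] := f_axis Pn.
rewrite /fnat map_rev; split=> [|fr]; first exact: f_rev.
by rewrite -(revK (map u w)); apply: f_rev.
Qed.

(** * Neutral scoring rules are positional *)

Section Scoring.
Variables (n : nat) (cost : {fset U} -> seq U -> R).
Hypothesis cost_f : forall P, profile_over (candset n) P -> forall s,
  f (candset n) P s <-> (is_axis (candset n) s /\ forall t, is_axis (candset n) t ->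
     (\sum_(A <- P) cost A s <= \sum_(A <- P) cost A t)%R).

Definition total_cost Q v := (\sum_(A <- Q) cost (cands A) (map u v))%R.

Lemma fnat_argmin_cost Q v : nat_profile n Q -> v \in axes n ->
  fnat n Q v <-> minimizes (axes n) (total_cost Q) v.
Proof.
move=> Qn vA; rewrite /fnat cost_f; last exact: profile_nat.
split=> [[_ min_v] | /allP min_v].
  by apply/allP => t tA; have := min_v _ (axis_map tA); rewrite !big_map.
split; first exact: axis_map.
by move=> _ /axisP [t tA ->]; rewrite !big_map; apply: min_v.
Qed.

Definition relabel_cand (s : seq nat) (y : U) :=
  if y \in map u (iota 0 n) then u (nth 0 s (index y (map u (iota 0 n)))) else y.

Lemma relabel_cand_u s i : i < n -> relabel_cand s (u i) = u (nth 0 s i).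
Proof.
move=> lt_in; rewrite /relabel_cand (mem_map u_inj) mem_iota lt_in.
by rewrite (index_map u_inj) index_iota0.
Qed.

Lemma map_relabel_cand s A : bounded n A ->
  map (relabel_cand s) (map u A) = map u (relabel s A).
Proof.
by move=> /allP An; rewrite -!map_comp; apply/eq_in_map => i /An ? /=; apply: relabel_cand_u.
Qed.

Lemma fnat_relabel Q v s : nat_profile n Q -> v \in axes n -> s \in axes n ->
  fnat n Q v <-> fnat n (map (relabel s) Q) (relabel s v).
Proof.
move=> Qn vA sA; have Pn := profile_nat Qn.
have candsP y : y \in candset n -> exists2 i, i < n & y = u i.
  by rewrite mem_cands => /mapP[i]; rewrite mem_iota => /= lt_in ->; exists i.
have pi_inj : {in candset n &, injective (relabel_cand s)}.
  move=> _ _ /candsP[i lt_in ->] /candsP[j lt_jn ->].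
  rewrite !relabel_cand_u // => /u_inj/eqP.
  by rewrite nth_uniq ?(axes_size sA) ?(axes_uniq sA) // => /eqP ->.
have pi_cands A : bounded n A -> relabel_cand s @` cands A = cands (relabel s A).
  by move=> An; rewrite /cands imfset_map map_relabel_cand.
have pi_img : relabel_cand s @` candset n = candset n.
  rewrite pi_cands ?axes_bounded ?iota_axes // -(cands_axes sA); congr cands.
  by rewrite /relabel -(axes_size sA) -[RHS](mkseq_nth 0).
have := f_neutral pi_inj pi_img Pn.
have -> : rename_profile (relabel_cand s) (map cands Q) = map cands (map (relabel s) Q).
  rewrite /rename_profile -!map_comp; apply/eq_in_map => A AQ /=.
  by apply: pi_cands; have /andP[] := allP Qn A AQ.
rewrite /fnat => rename_f; split=> [fv | /rename_f [s0 fs0 E]].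
  by apply/rename_f; exists (map u v); rewrite // map_relabel_cand ?axes_bounded.
have [_ [s0_axis _]] := f_axis Pn; have [t tA s0t] := axisP (s0_axis _ fs0).
move: E fs0; rewrite s0t map_relabel_cand ?axes_bounded // => /(inj_map u_inj) E.
have -> // : v = t.
by rewrite -(relabelK sA (axes_bounded vA)) E (relabelK sA (axes_bounded tA)).
Qed.

Definition relabelled_cost s P w := total_cost (map (relabel s) P) (relabel s w).

Lemma fnat_argmin_relabelled s P w : s \in axes n -> nat_profile n P -> w \in axes n ->
  fnat n P w <-> minimizes (axes n) (relabelled_cost s P) w.
Proof.
move=> sA Pn wA; rewrite (fnat_relabel Pn wA sA) fnat_argmin_cost ?relabel_axes //;
  last exact: relabel_nat_profile.
split=> /allP min_w; apply/allP => t tA; first exact: min_w (relabel_axes sA tA).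
by have [v vA <-] := relabel_surj sA tA; apply: min_w.
Qed.

Definition averaged_cost P w := (\sum_(s <- axes n)
  \sum_(b <- [:: false; true]) relabelled_cost s P (if b then rev w else w))%R.

Lemma fnat_argmin_averaged P w : nat_profile n P -> w \in axes n ->
  fnat n P w <-> minimizes (axes n) (averaged_cost P) w.
Proof.
move=> Pn; have w0 := fnat_exists Pn; apply: argmin_sum => //.
  by case: (axes n) (iota_axes n).
move=> s sA v vA; apply: argmin_sum => // -[] _ {}v {}vA; last exact: fnat_argmin_relabelled.
rewrite (fnat_rev _ Pn) (fnat_argmin_relabelled sA Pn (rev_axes vA)).
split=> /allP min_v; apply/allP => t tA; first exact: min_v (rev_axes tA).
by rewrite -(revK t); apply: min_v; apply: rev_axes.
Qed.

Definition pos_cost S := (\sum_(s <- axes n) cost (cands (relabel s S)) (map u s))%R.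
Definition sym_pos_cost S := (pos_cost S + pos_cost (mirror n S))%R.

Lemma sum_relabelled_cost P v : nat_profile n P -> v \in axes n ->
  (\sum_(s <- axes n) relabelled_cost s P v)%R = pos_score pos_cost P v.
Proof.
move=> Pn vA; rewrite /relabelled_cost /total_cost /pos_score.
under eq_bigr do rewrite big_map.
rewrite exchange_big /= big_seq_cond [RHS]big_seq_cond; apply: eq_bigr => A /andP[AP _].
have /andP[_ Ab] := allP Pn A AP.
symmetry; rewrite /pos_cost -(perm_big _ (perm_relabel_axes vA)) big_map.
by apply: eq_bigr => s _; rewrite (relabel_positions _ vA Ab).
Qed.

Lemma averaged_cost_positional P w : nat_profile n P -> w \in axes n ->
  averaged_cost P w = pos_score sym_pos_cost P w.
Proof.
move=> Pn wA; rewrite /averaged_cost.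
under eq_bigr do rewrite !big_cons big_nil addr0.
rewrite big_split /= !sum_relabelled_cost ?rev_axes // -big_split /=.
rewrite big_seq_cond [RHS]big_seq_cond; apply: eq_bigr => A /andP[AP _].
by have /andP[_ Ab] := allP Pn A AP; rewrite (positions_rev wA Ab).
Qed.

End Scoring.

Definition represents n (X : seq nat -> R) := forall P w, nat_profile n P -> w \in axes n ->
  fnat n P w <-> minimizes (axes n) (pos_score X P) w.

Lemma positional_representation n : exists X : seq nat -> R,
  [/\ represents n X, forall S S', S =i S' -> X S = X S' &
      forall S, bounded n S -> X (mirror n S) = X S].
Proof.
have [cost [_ cost_f]] := f_score (candset n).
exists (sym_pos_cost n cost); split.
- move=> P w Pn wA; rewrite (fnat_argmin_averaged cost_f Pn wA) /minimizes.
  rewrite averaged_cost_positional //.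
  by under eq_in_all => t tA do rewrite averaged_cost_positional //.
- move=> S S' eqS.
  have eq_cost T T' : T =i T' -> pos_cost n cost T = pos_cost n cost T'.
    move=> eqT; apply: eq_bigr => s _; congr (cost _ _); apply/fsetP => y.
    by rewrite !mem_cands /relabel; do 2!apply: eq_mem_map.
  rewrite /sym_pos_cost (eq_cost _ _ eqS) (eq_cost (mirror n S) (mirror n S')) //.
  exact: eq_mem_map.
- by move=> S Sn; rewrite /sym_pos_cost mirrorK // addrC.
Qed.

(** * Consistency with linearity *)

Section Linear.
Variable n : nat.

Lemma single_profile A : A != [::] -> bounded n A -> nat_profile n [:: A].
Proof. by move=> An Ab; rewrite /nat_profile /= An Ab. Qed.

Lemma fnat_single A s : A != [::] -> uniq A -> bounded n A -> s \in axes n ->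
  fnat n [:: A] s <-> is_interval (map u s) (cands A).
Proof.
move=> An uA Ab sA; have Pn := profile_nat (single_profile An Ab).
have A_linear : linear_profile (candset n) [:: cands A].
  exists (map u (prefix_axis n A)); split; first exact/axis_map/prefix_axis_axes.
  by move=> B; rewrite inE => /eqP ->; apply: interval_prefix.
rewrite /fnat /= (f_lin Pn A_linear); split=> [[_ /(_ (cands A))] | intA].
  by apply; rewrite inE.
by split=> [|B]; [apply: axis_map | rewrite inE => /eqP ->].
Qed.

Variable X : seq nat -> R.
Hypothesis X_f : represents n X.

Lemma score_interval_min A t : A != [::] -> uniq A -> bounded n A -> t \in axes n ->
  (X (iota 0 (size A)) <= X (positions t A))%R.
Proof.
move=> An uA Ab tA; have pA := prefix_axis_axes uA Ab.
have : fnat n [:: A] (prefix_axis n A).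
  by apply/fnat_single => //; apply: interval_prefix.
move/(X_f (single_profile An Ab) pA)/allP/(_ t tA).
by rewrite !pos_score1 positions_prefix.
Qed.

Lemma score_interval_shift m k : 0 < k -> m + k <= n -> X (iota m k) = X (iota 0 k).
Proof.
move=> k_gt0 mk_n; set A := iota m k.
have An : A != [::] by rewrite /A; case: (k) k_gt0.
have uA : uniq A by apply: iota_uniq.
have Ab : bounded n A.
  by apply/allP => i; rewrite mem_iota => /andP[_ /leq_trans]; apply.
have : fnat n [:: A] (iota 0 n).
  apply/fnat_single; rewrite ?iota_axes // (interval_iotaP Ab) => i j l.
  rewrite !mem_iota => /andP[mi _] /andP[_ lm] /andP[ij jl].
  by rewrite (leq_trans mi (ltnW ij)) (ltn_trans jl lm).
move/(X_f (single_profile An Ab) (iota_axes n))/allP/(_ _ (prefix_axis_axes uA Ab)).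
rewrite !pos_score1 positions_prefix // positions_iota // size_iota => le_A.
apply/eqP; rewrite eq_le le_A /=.
by have := score_interval_min An uA Ab (iota_axes n); rewrite positions_iota // size_iota.
Qed.

Lemma score_gap_gt S i j k : S != [::] -> uniq S -> bounded n S ->
  i \in S -> k \in S -> j \notin S -> i < j < k ->
  (X (iota 0 (size S)) < X S)%R.
Proof.
move=> Sn uS Sb iS kS jS ijk.
have not_f : ~ fnat n [:: S] (iota 0 n).
  move/fnat_single => /(_ Sn uS Sb (iota_axes n)) /(interval_iotaP Sb).
  by move=> /(_ i j k iS kS ijk); apply/negP.
have /allPn [t tA] : ~~ minimizes (axes n) (pos_score X [:: S]) (iota 0 n).
  by apply: contra_notN not_f => /(X_f (single_profile Sn Sb) (iota_axes n)).
rewrite !pos_score1 positions_iota // -ltNge => lt_t.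
exact: le_lt_trans (score_interval_min Sn uS Sb tA) lt_t.
Qed.

End Linear.

(** * Clones *)

Definition between (c x : nat) (s : seq nat) (y : nat) :=
  (index c s < index y s < index x s) || (index x s < index y s < index c s).

Definition proximity_ok c x (P : seq (seq nat)) s :=
  all (fun y => between c x s y ==> all (fun A => (c \in A) && (x \in A) ==> (y \in A)) P) s.

Definition clone_of c x (P : seq (seq nat)) := all (fun A => (c \in A) == (x \in A)) P.
Definition drop_cand c (P : seq (seq nat)) := map (filter (predC1 c)) P.

Section Cloning.
Variables (n x : nat) (P : seq (seq nat)).
Hypotheses (Pn : nat_profile n.+1 P) (Pn' : nat_profile n (drop_cand n P)).
Hypotheses (x_lt : x < n) (x_clone : clone_of n x P).

Lemma clones_nat : clones (candset n.+1) (map cands P) (u n) (u x).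
Proof.
split; rewrite ?cands_u ?mem_iota ?(inj_eq u_inj) //=.
- by rewrite ltnS ltnW.
- by rewrite gtn_eqF.
move=> _ /mapP[A AP ->]; rewrite !cands_u; apply/eqP; exact: (allP x_clone).
Qed.

Lemma remove_cand_nat : remove_cand (map cands P) (u n) = map cands (drop_cand n P).
Proof.
rewrite /remove_cand (_ : map _ _ = map cands (drop_cand n P)); last first.
  by rewrite -!map_comp; apply/eq_map => A /=; rewrite cands_fsetD1.
apply/all_filterP/allP => _ /mapP[A AP ->]; apply: cands_neq0.
by have /andP[] := allP Pn' A AP.
Qed.

Lemma fnat_clone_extend t : t \in axes n -> fnat n (drop_cand n P) t ->
  exists s, [/\ s \in axes n.+1, filter (predC1 n) s = t & fnat n.+1 P s].
Proof.
move=> tA; have Pc := profile_nat Pn.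
have [_ extend] := f_res Pc clones_nat.
rewrite /fnat -candset_fsetD1 -remove_cand_nat => /extend[s fs st].
have [_ [s_axis _]] := f_axis Pc; have [v vA sv] := axisP (s_axis _ fs).
exists v; split; rewrite -?sv //; apply: (inj_map u_inj).
by rewrite -filter_map_predC1 // -sv.
Qed.

Lemma fnat_proximity_ok s : fnat n.+1 P s -> proximity_ok n x P s.
Proof.
move=> fs; apply/allP => y ys; apply/implyP => btw; apply/allP => A AP.
apply/implyP => /andP[nA xA]; have := f_prox (profile_nat Pn) clones_nat fs.
move=> /(_ (u y) (cands A)); rewrite !cands_u !(index_map u_inj) map_f //.
by apply; rewrite // ?map_f //; apply/orP.
Qed.

End Cloning.

Section Optima.
Variables (n : nat) (X : seq nat -> R).
Hypothesis X_f : represents n X.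

Lemma optimal_score_eq P a b : fnat n P a -> fnat n P b ->
  nat_profile n P -> a \in axes n -> b \in axes n -> pos_score X P a = pos_score X P b.
Proof.
move=> fa fb Pn aA bA; apply/eqP; rewrite eq_le.
by rewrite (allP ((X_f Pn aA).1 fa) b bA) (allP ((X_f Pn bA).1 fb) a aA).
Qed.

Lemma non_optimal_score_gt P w0 w : fnat n P w0 -> ~ fnat n P w ->
  nat_profile n P -> w0 \in axes n -> w \in axes n ->
  (pos_score X P w0 < pos_score X P w)%R.
Proof.
move=> fw0 not_fw Pn w0A wA.
have /allPn [t tA] : ~~ minimizes (axes n) (pos_score X P) w.
  by apply: contra_notN not_fw => /(X_f Pn wA).
rewrite -ltNge; apply: le_lt_trans; exact: (allP ((X_f Pn w0A).1 fw0)).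
Qed.

End Optima.

Section Lift.
Variables (n : nat) (X : seq nat -> R).
Hypothesis X_f : represents n.+1 X.
Hypothesis X_mem : forall S S', S =i S' -> X S = X S'.

(* [a1] and [a2] are the only extensions of [t] that resistance to cloning and
   clone-proximity allow. *)
Lemma lift_optimal P x t a1 a2 :
  fnat n (drop_cand n P) t -> all (fun A => perm_eq (positions a1 A) (positions a2 A)) P ->
  nat_profile n.+1 P -> nat_profile n (drop_cand n P) -> x < n -> clone_of n x P ->
  t \in axes n ->
  perm_eq [seq s <- axes n.+1 | (filter (predC1 n) s == t) && proximity_ok n x P s]
          [:: a1; a2] ->
  fnat n.+1 P a1 /\ fnat n.+1 P a2.
Proof.
move=> ft /(pos_score_perm X_mem) eq_a Pn Pn' x_lt x_clone tA ext.
have [s [sA st fs]] := fnat_clone_extend Pn Pn' x_lt x_clone tA ft.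
have mem_ext a : a \in [:: a1; a2] -> a \in axes n.+1.
  by rewrite -(perm_mem ext) mem_filter => /andP[].
have : s \in [:: a1; a2].
  by rewrite -(perm_mem ext) mem_filter sA st eqxx (fnat_proximity_ok Pn x_lt x_clone fs).
have opt a : a \in axes n.+1 -> pos_score X P a = pos_score X P s -> fnat n.+1 P a.
  move=> aA eq_as; apply/(X_f Pn aA)/allP => w wA; rewrite eq_as.
  exact: (allP ((X_f Pn sA).1 fs)).
have [a1A a2A] : a1 \in axes n.+1 /\ a2 \in axes n.+1.
  by split; apply: mem_ext; rewrite !inE eqxx ?orbT.
by rewrite !inE => /orP[] /eqP s_a; split; apply: opt; rewrite // s_a ?eq_a.
Qed.

End Lift.

(** * Four and five candidates *)

(* Candidate 4 is a clone of 3, 0, 1 and 1 in [prof1], ..., [prof4] respectively. *)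
Definition prof1 : seq (seq nat) := [:: [:: 0; 1; 3; 4]; [:: 0; 2; 3; 4]; [:: 1; 2; 3; 4]].
Definition prof2 : seq (seq nat) :=
  [:: [:: 0; 1; 2; 4]; [:: 0; 1; 3; 4]; [:: 0; 2; 3; 4]; [:: 1; 2; 3]].
Definition prof3 : seq (seq nat) := [:: [:: 1; 2; 4]; [:: 1; 3; 4]; [:: 2; 3]].
Definition prof4 : seq (seq nat) :=
  prof3 ++ [:: [:: 0; 1; 3; 4]; [:: 0; 2; 3]; [:: 1; 2; 3; 4]].

Lemma axes4E : axes 4 = ltac:(let s := eval vm_compute in (axes 4) in exact s).
Proof. by vm_compute. Qed.

Lemma four_candidate_optima :
  [/\ fnat 4 (drop_cand 4 prof1) [:: 0; 1; 3; 2],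
      fnat 4 (drop_cand 4 prof2) [:: 1; 2; 0; 3] /\
      fnat 4 (drop_cand 4 prof2) [:: 0; 1; 2; 3],
      fnat 4 (drop_cand 4 prof3) [:: 0; 3; 2; 1] /\
      fnat 4 (drop_cand 4 prof3) [:: 0; 1; 2; 3] &
      fnat 4 (drop_cand 4 prof4) [:: 1; 3; 2; 0] /\
      fnat 4 (drop_cand 4 prof4) [:: 0; 1; 3; 2]].
Proof.
have [X [X_f X_mem X_mirror]] := positional_representation 4.
have shift m k := score_interval_shift X_f (m := m) (k := k).
have gap S i j k := score_gap_gt X_f (S := S) (i := i) (j := j) (k := k).
have e12 : X [:: 1; 2] = X [:: 0; 1] by apply: (shift 1 2).
have e23 : X [:: 2; 3] = X [:: 0; 1] by apply: (shift 2 2).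
have e123 : X [:: 1; 2; 3] = X [:: 0; 1; 2] by apply: (shift 1 3).
have e13 : X [:: 1; 3] = X [:: 0; 2] by apply: (score_mirror_perm X_mem X_mirror).
have e023 : X [:: 0; 2; 3] = X [:: 0; 1; 3] by apply: (score_mirror_perm X_mem X_mirror).
have g02 : (X [:: 0; 1] < X [:: 0; 2])%R by apply: (gap [:: 0; 2] 0 1 2).
have g03 : (X [:: 0; 1] < X [:: 0; 3])%R by apply: (gap [:: 0; 3] 0 1 3).
have g013 : (X [:: 0; 1; 2] < X [:: 0; 1; 3])%R by apply: (gap [:: 0; 1; 3] 1 2 3).
have optimal P w : nat_profile 4 P -> w \in axes 4 ->
    minimizes (axes 4) (fun v => \sum_(A <- P) X (sort leq (positions v A)))%R w ->
    fnat 4 P w.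
  move=> Pn wA /allP sorted_min; apply/(X_f _ _ Pn wA)/allP => t tA.
  by rewrite !(pos_score_sort X_mem); apply: sorted_min.
split; [|split|split|split]; apply: optimal; rewrite /minimizes ?axes4E //=;
  rewrite !big_cons !big_nil /sort /= andbT;
  by do ![apply/andP; split]; lra.
Qed.

Lemma five_candidate_scores X : represents 5 X -> (forall S S', S =i S' -> X S = X S') ->
  [/\ (pos_score X prof1 [:: 0; 1; 3; 4; 2] < pos_score X prof1 [:: 0; 4; 1; 3; 2])%R,
      pos_score X prof2 [:: 1; 2; 0; 4; 3] = pos_score X prof2 [:: 0; 4; 1; 2; 3],
      pos_score X prof3 [:: 0; 3; 2; 1; 4] = pos_score X prof3 [:: 0; 1; 4; 2; 3] &
      pos_score X prof4 [:: 1; 4; 3; 2; 0] = pos_score X prof4 [:: 0; 1; 4; 3; 2]].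
Proof.
move=> X_f X_mem; have [f1 [f2 f2'] [f3 f3'] [f4 f4']] := four_candidate_optima.
have [o1 _] := lift_optimal X_f X_mem (x := 3)
  (a1 := [:: 0; 1; 3; 4; 2]) (a2 := [:: 0; 1; 4; 3; 2]) f1
  isT isT isT isT isT isT isT.
have not_o1 : ~ fnat 5 prof1 [:: 0; 4; 1; 3; 2].
  by move/(fnat_proximity_ok (n := 4) (x := 3) (P := prof1) isT isT isT).
have gt1 := non_optimal_score_gt X_f o1 not_o1 isT isT isT.
have [o2 _] := lift_optimal X_f X_mem (x := 0)
  (a1 := [:: 1; 2; 0; 4; 3]) (a2 := [:: 1; 2; 4; 0; 3]) f2
  isT isT isT isT isT isT isT.
have [o2' _] := lift_optimal X_f X_mem (x := 0)
  (a1 := [:: 0; 4; 1; 2; 3]) (a2 := [:: 4; 0; 1; 2; 3]) f2'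
  isT isT isT isT isT isT isT.
have eq2 := optimal_score_eq X_f o2 o2' isT isT isT.
have [o3 _] := lift_optimal X_f X_mem (x := 1)
  (a1 := [:: 0; 3; 2; 1; 4]) (a2 := [:: 0; 3; 2; 4; 1]) f3
  isT isT isT isT isT isT isT.
have [o3' _] := lift_optimal X_f X_mem (x := 1)
  (a1 := [:: 0; 1; 4; 2; 3]) (a2 := [:: 0; 4; 1; 2; 3]) f3'
  isT isT isT isT isT isT isT.
have eq3 := optimal_score_eq X_f o3 o3' isT isT isT.
have [o4 _] := lift_optimal X_f X_mem (x := 1)
  (a1 := [:: 1; 4; 3; 2; 0]) (a2 := [:: 4; 1; 3; 2; 0]) f4
  isT isT isT isT isT isT isT.
have [o4' _] := lift_optimal X_f X_mem (x := 1)
  (a1 := [:: 0; 1; 4; 3; 2]) (a2 := [:: 0; 4; 1; 3; 2]) f4'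
  isT isT isT isT isT isT isT.
have eq4 := optimal_score_eq X_f o4 o4' isT isT isT.
by split.
Qed.

Lemma no_such_rule : False.
Proof.
have [X [X_f X_mem X_mirror]] := positional_representation 5.
have [] := five_candidate_scores X_f X_mem.
rewrite !(pos_score_sort X_mem) !big_cons !big_nil /sort /=.
have shift m k := score_interval_shift X_f (m := m) (k := k).
have e1234 : X [:: 1; 2; 3; 4] = X [:: 0; 1; 2; 3] by apply: (shift 1 4).
have e234 : X [:: 2; 3; 4] = X [:: 0; 1; 2] by apply: (shift 2 3).
have e123 : X [:: 1; 2; 3] = X [:: 0; 1; 2] by apply: (shift 1 3).
have e34 : X [:: 3; 4] = X [:: 0; 1] by apply: (shift 3 2).
have e23 : X [:: 2; 3] = X [:: 0; 1] by apply: (shift 2 2).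
have e12 : X [:: 1; 2] = X [:: 0; 1] by apply: (shift 1 2).
have mirror_eq S S' := score_mirror_perm X_mem X_mirror (S := S) (S' := S').
have m0234 : X [:: 0; 2; 3; 4] = X [:: 0; 1; 2; 4] by apply: mirror_eq.
have m134 : X [:: 1; 3; 4] = X [:: 0; 1; 3] by apply: mirror_eq.
have m124 : X [:: 1; 2; 4] = X [:: 0; 2; 3] by apply: mirror_eq.
have m034 : X [:: 0; 3; 4] = X [:: 0; 1; 4] by apply: mirror_eq.
lra.
Qed.

End Rule.

End Encoding.

Theorem mainTheorem11 (U : choiceType) (R : realType) :
  infinite_universe U ->
  ~ (exists f : rule_type U,
       [/\ axis_rule f, scoring_rule R f, neutral f,
           consistent_with_linearity f &
           resistant_to_cloning f /\ clone_proximity f]).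
Proof.
move=> U_inf [f [f_axis f_score f_neutral f_lin [f_res f_prox]]].
exact: (no_such_rule (@fresh_inj U U_inf) f_axis f_score f_neutral f_lin f_res f_prox).
Qed.
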